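(* Let $\beta>0$, let $u_0,k$ be real, let $f(u)=(u-u_0)(k-u)$, and let $\Phi(u)=\beta\left(-\frac{u^4}{4}+\frac{k+u_0}{3}u^3-\frac{ku_0}{2}u^2\right)$. Let $\delta$ be the involution defined in the context and put $w=\delta(u)$. Then: (a) $uf(u)+wf(w)<0$ in the case $0<u_0<k<2u_0$ (for all $u\in(u_0,k)$) and in the case $k>0$, $u_0<-k$ (for all $u\in(0,k)$); (b) $uf(u)+wf(w)>0$ in the case $k>0$, $-k<u_0<0$ (for all $u\in(0,u_1)$).
   Context: The involution $\delta$ is defined by $\Phi(\delta(u))=\Phi(u)$ with $\delta(u)$ on the other side of the relevant center, as follows. Case $0<u_0<k<2u_0$: let $w_1$ be the unique point of $(0,u_0)$ with $\Phi(w_1)=\Phi(k)$; for $u\in(u_0,k)$, $\delta(u)$ is the unique $w\in(w_1,u_0)$ with $\Phi(w)=\Phi(u)$. Case $k>0$, $-k<u_0<0$: let $u_1$ be the unique point of $(0,k)$ with $\Phi(u_1)=\Phi(u_0)$; for $u\in(0,u_1)$, $\delta(u)$ is the unique $w\in(u_0,0)$ with $\Phi(w)=\Phi(u)$. Case $k>0$, $u_0<-k$: let $w_2$ be the unique point of $(u_0,0)$ with $\Phi(w_2)=\Phi(k)$; for $u\in(0,k)$, $\delta(u)$ is the unique $w\in(w_2,0)$ with $\Phi(w)=\Phi(u)$. *)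

From Stdlib Require Import Reals Lra.
Open Scope R_scope.

Definition fq (u0 k u : R) : R := (u - u0) * (k - u).

Definition Phi (beta u0 k u : R) : R :=
  beta * (- u ^ 4 / 4 + (k + u0) / 3 * u ^ 3 - k * u0 / 2 * u ^ 2).

(* Since Phi'(u) = beta u f(u), two distinct points u, w of a level set of Phi
   satisfy u f(u) + w f(w) = (u+w)(u+w-2k)(u+w-2u0)/2, so it suffices to place
   u + w relative to 0, 2 u0 and 2 k.  Phi(2 u0 - t) - Phi(t) is a multiple of
   (2 u0 - k)(t - u0)^3 and Phi(t) - Phi(-t) one of (k + u0) t^3; these signs
   compare Phi(u) with Phi at the mirror image of u, and strict monotonicity of
   Phi between its critical points 0, u0, k then compares w with that image. *)

From Pilot Require Import Defs.
From Stdlib Require Import Reals Lra.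
From Coquelicot Require Import Coquelicot.
Open Scope R_scope.

Lemma incr_function_lt_iff (f df : R -> R) (a b : R) :
  (forall t, a < t < b -> is_derive f t (df t)) ->
  (forall t, a < t < b -> 0 < df t) ->
  forall x y, a < x < b -> a < y < b -> (f x < f y <-> x < y).
Proof.
  intros Hder Hpos.
  assert (Hincr : forall x y, a < x -> x < y -> y < b -> f x < f y).
  { intros x y Hx Hxy Hy.
    apply (incr_function f a b df); simpl; try assumption;
      intros t Ht Ht'; [apply Hder | apply Hpos]; lra. }
  intros x y Hx Hy; split; intros H.
  - destruct (Rlt_or_le x y) as [Hxy | [Hyx | Hyx]]; [exact Hxy | | subst; lra].
    pose proof (Hincr y x ltac:(lra) Hyx ltac:(lra)); lra.
  - apply Hincr; lra.
Qed.

Section PhiLevelSets.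

Variables beta u0 k : R.
Hypothesis beta_gt0 : 0 < beta.

Local Notation Phi := (Phi beta u0 k).
Local Notation f := (fq u0 k).

Lemma Phi_derive t : is_derive Phi t (beta * (t * f t)).
Proof. unfold Phi, fq; auto_derive; [exact I | field]. Qed.

Lemma Phi_incr_lt_iff (a b : R) :
  (forall t, a < t < b -> 0 < t * f t) ->
  forall x y, a < x < b -> a < y < b -> (Phi x < Phi y <-> x < y).
Proof.
  intros Hpos; apply (incr_function_lt_iff _ (fun t => beta * (t * f t))).
  - intros t _; apply Phi_derive.
  - intros t Ht; apply Rmult_lt_0_compat; auto.
Qed.

Lemma Phi_decr_lt_iff (a b : R) :
  (forall t, a < t < b -> t * f t < 0) ->
  forall x y, a < x < b -> a < y < b -> (Phi x < Phi y <-> y < x).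
Proof.
  intros Hneg x y Hx Hy.
  assert (Hopp : - Phi y < - Phi x <-> y < x).
  { apply (incr_function_lt_iff (fun t => - Phi t)
                                 (fun t => - (beta * (t * f t))) a b); auto.
    - intros t _; apply (is_derive_opp Phi), Phi_derive.
    - intros t Ht; specialize (Hneg t Ht); nra. }
  rewrite <- Hopp; split; intros; lra.
Qed.

Lemma Phi_sub_opp t : Phi t - Phi (- t) = 2 * beta * (k + u0) * t ^ 3 / 3.
Proof. unfold Defs.Phi; field. Qed.

Lemma Phi_sub_mirror_u0 t :
  Phi (2 * u0 - t) - Phi t = 2 * beta * (2 * u0 - k) * (t - u0) ^ 3 / 3.
Proof. unfold Defs.Phi; field. Qed.

Lemma Phi_sub_factor u w :
  Phi w - Phi u =
  beta * (w - u) / 12 *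
  (2 * (u * f u + w * f w) - (u + w) * (u + w - 2 * k) * (u + w - 2 * u0)).
Proof. unfold Defs.Phi, fq; field. Qed.

Lemma Phi_level_mul_fq_sum u w : w <> u -> Phi w = Phi u ->
  u * f u + w * f w = (u + w) * (u + w - 2 * k) * (u + w - 2 * u0) / 2.
Proof.
  intros Hwu Hlevel.
  pose proof (Phi_sub_factor u w) as E.
  rewrite Hlevel, Rminus_diag in E.
  assert (Hwu' : 0 < beta * (w - u) / 12 \/ beta * (w - u) / 12 < 0).
  { destruct (Rdichotomy _ _ Hwu); [right | left]; nra. }
  destruct Hwu'; nra.
Qed.

Lemma Phi_level_mul_fq_sum_lt0 u w : w <> u -> Phi w = Phi u ->
  0 < u + w -> 2 * u0 < u + w < 2 * k -> u * f u + w * f w < 0.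
Proof.
  intros Hwu Hlevel Hs Hs'; rewrite (Phi_level_mul_fq_sum u w Hwu Hlevel).
  assert (0 < (u + w) * (u + w - 2 * u0)) by (apply Rmult_lt_0_compat; lra).
  nra.
Qed.

Lemma Phi_level_mul_fq_sum_gt0 u w : w <> u -> Phi w = Phi u ->
  u + w < 0 -> 2 * u0 < u + w < 2 * k -> 0 < u * f u + w * f w.
Proof.
  intros Hwu Hlevel Hs Hs'; rewrite (Phi_level_mul_fq_sum u w Hwu Hlevel).
  assert (0 < - (u + w) * (u + w - 2 * u0)) by (apply Rmult_lt_0_compat; lra).
  nra.
Qed.

Lemma Phi_level_mirror_u0_lt (u w : R) : 0 < u0 < k -> k < 2 * u0 ->
  u0 < u < k -> 0 < w < u0 -> Phi w = Phi u -> 2 * u0 - u < w.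
Proof.
  intros Hk Hk' Hu Hw Hlevel.
  apply (Phi_decr_lt_iff 0 u0); try lra.
  - intros t Ht; unfold fq.
    assert (0 < t * (u0 - t)) by (apply Rmult_lt_0_compat; lra); nra.
  - rewrite Hlevel.
    pose proof (Phi_sub_mirror_u0 u).
    assert (0 < (u - u0) ^ 3) by (apply pow_lt; lra).
    assert (0 < beta * (2 * u0 - k)) by (apply Rmult_lt_0_compat; lra).
    nra.
Qed.

Lemma mul_fq_lt0_on_u0_0 : u0 < 0 < k ->
  forall t, u0 < t < 0 -> t * f t < 0.
Proof.
  intros Hk t Ht; unfold fq.
  assert (0 < - t * (t - u0)) by (apply Rmult_lt_0_compat; lra); nra.
Qed.

Lemma Phi_level_opp_lt (u w : R) : 0 < k -> u0 < - k ->
  0 < u < k -> u0 < w < 0 -> Phi w = Phi u -> - u < w.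
Proof.
  intros Hk Hu0 Hu Hw Hlevel.
  apply (Phi_decr_lt_iff u0 0); try lra.
  - apply mul_fq_lt0_on_u0_0; lra.
  - rewrite Hlevel.
    pose proof (Phi_sub_opp u).
    assert (0 < u ^ 3) by (apply pow_lt; lra).
    assert (0 < beta * - (k + u0)) by (apply Rmult_lt_0_compat; lra).
    nra.
Qed.

Lemma Phi_level_u0_lt_opp (u1 : R) : 0 < k -> - k < u0 < 0 ->
  0 < u1 < k -> Phi u1 = Phi u0 -> u1 < - u0.
Proof.
  intros Hk Hu0 Hu1 Hlevel.
  apply (Phi_incr_lt_iff 0 k); try lra.
  - intros t Ht; unfold fq.
    assert (0 < t * (t - u0)) by (apply Rmult_lt_0_compat; lra); nra.
  - rewrite Hlevel.
    pose proof (Phi_sub_opp u0).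
    assert (0 < (- u0) ^ 3) by (apply pow_lt; lra).
    assert (0 < beta * (k + u0)) by (apply Rmult_lt_0_compat; lra).
    replace ((- u0) ^ 3) with (- u0 ^ 3) in * by ring.
    nra.
Qed.

Lemma Phi_level_lt_opp (u w : R) : 0 < k -> - k < u0 < 0 ->
  0 < u < - u0 -> u0 < w < 0 -> Phi w = Phi u -> w < - u.
Proof.
  intros Hk Hu0 Hu Hw Hlevel.
  apply (Phi_decr_lt_iff u0 0); try lra.
  - apply mul_fq_lt0_on_u0_0; lra.
  - rewrite Hlevel.
    pose proof (Phi_sub_opp u).
    assert (0 < u ^ 3) by (apply pow_lt; lra).
    assert (0 < beta * (k + u0)) by (apply Rmult_lt_0_compat; lra).
    nra.
Qed.

End PhiLevelSets.

Theorem lemma3p3 (beta u0 k : R) : 0 < beta ->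
  (* (a), case 0 < u0 < k < 2 u0: w1 = the point of (0,u0) with Phi w1 = Phi k,
     w = delta(u) = the point of (w1,u0) with Phi w = Phi u *)
  ((0 < u0 /\ u0 < k /\ k < 2 * u0) ->
     forall w1, 0 < w1 < u0 -> Phi beta u0 k w1 = Phi beta u0 k k ->
     forall u w, u0 < u < k -> w1 < w < u0 -> Phi beta u0 k w = Phi beta u0 k u ->
     u * fq u0 k u + w * fq u0 k w < 0) /\
  (* (a), case k > 0, u0 < -k: w2 = the point of (u0,0) with Phi w2 = Phi k,
     w = delta(u) = the point of (w2,0) with Phi w = Phi u *)
  ((0 < k /\ u0 < - k) ->
     forall w2, u0 < w2 < 0 -> Phi beta u0 k w2 = Phi beta u0 k k ->
     forall u w, 0 < u < k -> w2 < w < 0 -> Phi beta u0 k w = Phi beta u0 k u ->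
     u * fq u0 k u + w * fq u0 k w < 0) /\
  (* (b), case k > 0, -k < u0 < 0: u1 = the point of (0,k) with Phi u1 = Phi u0,
     w = delta(u) = the point of (u0,0) with Phi w = Phi u *)
  ((0 < k /\ - k < u0 /\ u0 < 0) ->
     forall u1, 0 < u1 < k -> Phi beta u0 k u1 = Phi beta u0 k u0 ->
     forall u w, 0 < u < u1 -> u0 < w < 0 -> Phi beta u0 k w = Phi beta u0 k u ->
     u * fq u0 k u + w * fq u0 k w > 0).
Proof.
  intros Hbeta; split; [| split].
  - intros (Hu0 & Hk & Hk') w1 Hw1 _ u w Hu Hw Hlevel.
    assert (Hmirror : 2 * u0 - u < w)
      by (apply (Phi_level_mirror_u0_lt beta u0 k); auto; lra).
    apply (Phi_level_mul_fq_sum_lt0 beta u0 k Hbeta); auto; lra.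
  - intros (Hk & Hu0) w2 Hw2 _ u w Hu Hw Hlevel.
    assert (Hopp : - u < w) by (apply (Phi_level_opp_lt beta u0 k); auto; lra).
    apply (Phi_level_mul_fq_sum_lt0 beta u0 k Hbeta); auto; lra.
  - intros (Hk & Hu0 & Hu0') u1 Hu1 Hlevel1 u w Hu Hw Hlevel.
    assert (Hu1opp : u1 < - u0) by (apply (Phi_level_u0_lt_opp beta u0 k); auto).
    assert (Hopp : w < - u) by (apply (Phi_level_lt_opp beta u0 k); auto; lra).
    apply Rlt_gt, (Phi_level_mul_fq_sum_gt0 beta u0 k Hbeta); auto; lra.
Qed.
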